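(* Let $\tau:\mathscr{A}\to\mathbb{C}$ be a linear functional with $|\tau(q)|\le C_0^{\deg q}$ for every monomial $q$, and let $A>1$ with $C_0/A<1/2$. For $g_1,\dots,g_m\in\mathscr{A}_0$ set $$Q_m(g_1,\dots,g_m)=(1\otimes\tau+\tau\otimes1)\Big\{\sum_{i=1}^n\big[(\mathscr{J}\mathscr{D}g_1)\cdots(\mathscr{J}\mathscr{D}g_m)\big]_{ii}\Big\}.$$ Then $$\|Q_m(\Sigma g_1,\dots,\Sigma g_m)\|_A\le2(2A^{-2})^m\prod_{k=1}^m\|g_k\|_A.$$ In particular $(g_1,\dots,g_m)\mapsto Q_m(\Sigma g_1,\dots,\Sigma g_m)$ extends to a bounded multilinear map on $\mathscr{A}_0^{(A)}$ with values in $\mathscr{A}^{(A)}$.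
   Context: $\mathscr{A}=\mathbb{C}\langle X_1,\dots,X_n\rangle$, $\mathscr{A}_0$ the span of monomials of degree $\ge1$. For $P=\sum_q\lambda_q(P)q$, $\|P\|_A=\sum_q|\lambda_q(P)|A^{\deg q}$; $\mathscr{A}^{(A)}$, $\mathscr{A}_0^{(A)}$ the completions. $\Sigma:\mathscr{A}_0\to\mathscr{A}_0$ is defined on monomials by $\Sigma q=q/\deg q$ (the inverse of the operator $\mathscr{N}$ multiplying degree-$k$ monomials by $k$). $\partial_j$: derivation $\mathscr{A}\to\mathscr{A}\otimes\mathscr{A}^{op}$ with $\partial_jX_i=\delta_{ij}1\otimes1$; $\mathscr{D}_jq=\sum_{q=BX_jC}CB$; $\mathscr{J}\mathscr{D}g=(\partial_j\mathscr{D}_ig)_{i,j}\in M_n(\mathscr{A}\otimes\mathscr{A}^{op})$; matrix products use $(a\otimes b)(c\otimes d)=ac\otimes db$. $(1\otimes\tau+\tau\otimes1)(a\otimes b)=a\tau(b)+\tau(a)b$. *)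

(* Noncommutative polynomials C<X_1..X_n> over a numeric
   closed field R (e.g. algC / C), represented as formal finite sums. *)
From HB Require Import structures.
From mathcomp Require Import all_boot all_order all_algebra.
Set Implicit Arguments. Unset Strict Implicit. Unset Printing Implicit Defensive.
Import Order.TTheory GRing.Theory Num.Theory.
Local Open Scope ring_scope.

(* monomials = words in the letters X_0..X_{n-1} *)
Definition word (n : nat) := seq 'I_n.

Section NC.
Variables (R : numClosedFieldType) (n : nat).
Local Notation word := (word n).
(* elements of A: formal finite linear combinations of monomials *)
Definition ncpoly := seq (R * word).
(* elements of A (x) A^op: formal finite combinations of a (x) b *)
Definition nctens := seq (R * (word * word)).
(* elements of M_n(A (x) A^op) *)
Definition ncmx := 'I_n -> 'I_n -> nctens.

Definition coef (P : ncpoly) (w : word) : R := \sum_(x <- P | x.2 == w) x.1.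
Definition maxdeg (P : ncpoly) : nat := \max_(x <- P) size x.2.
(* ||P||_A = sum_q |lambda_q(P)| A^{deg q} (each word of length <= maxdeg once) *)
Definition normA (A : R) (P : ncpoly) : R :=
  \sum_(k < (maxdeg P).+1) \sum_(w : k.-tuple 'I_n) `|coef P w| * A ^+ k.

Definition in_A0 (P : ncpoly) : Prop := coef P [::] = 0.

Definition Sigma (P : ncpoly) : ncpoly :=
  [seq (x.1 / (size x.2)%:R, x.2) | x <- P].

Definition occ (j : 'I_n) (w : word) : seq nat :=
  [seq p <- iota 0 (size w) | nth j w p == j].

(* cyclic derivative: D_j q = sum_{q = B X_j C} C B *)
Definition cycD_mono (j : 'I_n) (w : word) : seq word :=
  [seq drop p.+1 w ++ take p w | p <- occ j w].
Definition cycD (j : 'I_n) (P : ncpoly) : ncpoly :=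
  flatten [seq [seq (x.1, v) | v <- cycD_mono j x.2] | x <- P].

(* free difference quotient: d_j q = sum_{q = B X_j C} B (x) C *)
Definition nder_mono (j : 'I_n) (w : word) : seq (word * word) :=
  [seq (take p w, drop p.+1 w) | p <- occ j w].
Definition nder (j : 'I_n) (P : ncpoly) : nctens :=
  flatten [seq [seq (x.1, u) | u <- nder_mono j x.2] | x <- P].

Definition JD (g : ncpoly) : ncmx := fun i j => nder j (cycD i g).

(* (a (x) b)(c (x) d) = ac (x) db *)
Definition tmul (s t : nctens) : nctens :=
  [seq (x.1 * y.1, (x.2.1 ++ y.2.1, y.2.2 ++ x.2.2)) | x <- s, y <- t].

Definition mxmul (M N : ncmx) : ncmx :=
  fun i j => flatten [seq tmul (M i k) (N k j) | k <- enum 'I_n].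
Definition mxid : ncmx :=
  fun i j => if i == j then [:: (1, ([::], [::]))] else [::].
Definition mxprod (Ms : seq ncmx) : ncmx := foldr mxmul mxid Ms.
Definition mxtr (M : ncmx) : nctens := flatten [seq M i i | i <- enum 'I_n].

(* (1 (x) tau + tau (x) 1)(a (x) b) = a tau(b) + tau(a) b, where the linear
   functional tau is given by its values on monomials *)
Definition tauE (tau : word -> R) (t : nctens) : ncpoly :=
  flatten [seq [:: (x.1 * tau x.2.2, x.2.1); (x.1 * tau x.2.1, x.2.2)] | x <- t].

Definition Qm (tau : word -> R) (m : nat) (g : 'I_m -> ncpoly) : ncpoly :=
  tauE tau (mxtr (mxprod [seq JD (g k) | k <- enum 'I_m])).

End NC.

(* Elements of A, A (x) A^op and M_n(A (x) A^op) are represented as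
   formal lists of (coefficient, monomial) pairs, possibly with repetitions.
   Two lists denote the same element iff every linear functional
   [feval h] (h assigning a value to each monomial) agrees on them; we call
   them equivalent.  The proof has four ingredients:

   1. Every operation (Sigma, cyclic and free derivatives, tensor
      and matrix products, trace, 1 (x) tau + tau (x) 1) respects equivalence,
      hence so does Q_m.
   2. The weighted l1-sum [fnorm (fun w => A ^+ size w)] of any representative
      dominates the norm ||.||_A, with equality for the canonical
      representative [canon P], which is equivalent to P.
   3. For a weight phi on pairs of monomials that is multiplicative for the
      product (a (x) b)(c (x) d) = ac (x) db, the total phi-mass of the entries
      of a matrix is submultiplicative; the two weights
      (a, b) |-> A^|a| C0^|b| and (a, b) |-> C0^|a| A^|b| dominate the two
      halves of 1 (x) tau + tau (x) 1.
   4. A geometric-sum estimate (2 C0 <= A) shows that each factor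
      JD(Sigma g_k) has total mass at most (2 / A^2) ||g_k||_A. *)

From HB Require Import structures.
From mathcomp Require Import all_boot all_order all_algebra.
From mathcomp Require Import zify ring.
Set Implicit Arguments. Unset Strict Implicit. Unset Printing Implicit Defensive.
Import Order.TTheory GRing.Theory Num.Theory.
Local Open Scope ring_scope.

Section FormalSums.
Variable R : numDomainType.

Definition feval {T : Type} (h : T -> R) (s : seq (R * T)) : R :=
  \sum_(x <- s) x.1 * h x.2.

Definition fnorm {T : Type} (h : T -> R) (s : seq (R * T)) : R :=
  \sum_(x <- s) `|x.1| * h x.2.

Definition fequiv {T : Type} (s s' : seq (R * T)) : Prop :=
  forall h, feval h s = feval h s'.

Lemma feval_flatten T (h : T -> R) (ss : seq (seq (R * T))) :
  feval h (flatten ss) = \sum_(s <- ss) feval h s.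
Proof. by rewrite /feval big_flatten. Qed.

Lemma fnorm_flatten T (h : T -> R) (ss : seq (seq (R * T))) :
  fnorm h (flatten ss) = \sum_(s <- ss) fnorm h s.
Proof. by rewrite /fnorm big_flatten. Qed.

(* Operations that send each monomial t to the multiset G t of monomials, with
   the same coefficient, act on functionals by summing h over G t. *)
Lemma feval_expand T U (G : T -> seq U) (h : U -> R) (s : seq (R * T)) :
  feval h (flatten [seq [seq (x.1, v) | v <- G x.2] | x <- s])
  = feval (fun t => \sum_(v <- G t) h v) s.
Proof.
rewrite feval_flatten big_map; apply: eq_bigr => x _.
by rewrite /feval big_map mulr_sumr.
Qed.

Lemma fnorm_expand T U (G : T -> seq U) (h : U -> R) (s : seq (R * T)) :
  fnorm h (flatten [seq [seq (x.1, v) | v <- G x.2] | x <- s])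
  = fnorm (fun t => \sum_(v <- G t) h v) s.
Proof.
rewrite fnorm_flatten big_map; apply: eq_bigr => x _.
by rewrite /fnorm big_map mulr_sumr.
Qed.

Lemma fnorm_ge0 T (h : T -> R) (s : seq (R * T)) :
  (forall t, 0 <= h t) -> 0 <= fnorm h s.
Proof. by move=> h_ge0; apply: sumr_ge0 => x _; rewrite mulr_ge0. Qed.

Lemma fnorm_sum T (I : finType) (f : I -> T -> R) (s : seq (R * T)) :
  fnorm (fun t => \sum_i f i t) s = \sum_i fnorm (f i) s.
Proof.
by rewrite /fnorm exchange_big /=; apply: eq_bigr => x _; rewrite mulr_sumr.
Qed.

End FormalSums.

Section Equivalence.
Variables (R : numClosedFieldType) (n : nat).

Lemma feval_Sigma (h : word n -> R) (P : ncpoly R n) :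
  feval h (Sigma P) = feval (fun w => (size w)%:R^-1 * h w) P.
Proof. by rewrite /feval big_map; apply: eq_bigr => x _; rewrite /= mulrA. Qed.

Lemma fequiv_Sigma (P P' : ncpoly R n) : fequiv P P' -> fequiv (Sigma P) (Sigma P').
Proof. by move=> eqPQ h; rewrite !feval_Sigma eqPQ. Qed.

Lemma fequiv_cycD i (P P' : ncpoly R n) : fequiv P P' -> fequiv (cycD i P) (cycD i P').
Proof. by move=> eqPQ h; rewrite /cycD !feval_expand eqPQ. Qed.

Lemma fequiv_nder j (P P' : ncpoly R n) : fequiv P P' -> fequiv (nder j P) (nder j P').
Proof. by move=> eqPQ h; rewrite /nder !feval_expand eqPQ. Qed.

Lemma feval_tmul (s t : nctens R n) h :
  feval h (tmul s t) = feval (fun a => feval (fun b => h (a.1 ++ b.1, b.2 ++ a.2)) t) s.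
Proof.
rewrite /feval /tmul big_allpairs_dep; apply: eq_bigr => x _.
by rewrite mulr_sumr; apply: eq_bigr => y _ /=; rewrite mulrA.
Qed.

Lemma fequiv_tmul (s s' t t' : nctens R n) :
  fequiv s s' -> fequiv t t' -> fequiv (tmul s t) (tmul s' t').
Proof.
move=> eq_s eq_t h; rewrite !feval_tmul eq_s.
by apply: eq_bigr => x _; rewrite eq_t.
Qed.

Definition mxequiv (M N : ncmx R n) : Prop := forall i j, fequiv (M i j) (N i j).

Lemma mxequiv_mul (M M' N N' : ncmx R n) :
  mxequiv M M' -> mxequiv N N' -> mxequiv (mxmul M N) (mxmul M' N').
Proof.
move=> eqM eqN i j h; rewrite /mxmul !feval_flatten !big_map.
by apply: eq_bigr => k _; rewrite (fequiv_tmul (eqM i k) (eqN k j)).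
Qed.

Lemma mxequiv_prod (I : Type) (F F' : I -> ncmx R n) (r : seq I) :
  (forall k, mxequiv (F k) (F' k)) ->
  mxequiv (mxprod (map F r)) (mxprod (map F' r)).
Proof.
move=> eqF; elim: r => [|k r IH] /=; first by move=> i j h.
exact: mxequiv_mul.
Qed.

Lemma mxequiv_JD (P P' : ncpoly R n) : fequiv P P' -> mxequiv (JD P) (JD P').
Proof. by move=> eqPQ i j; apply/fequiv_nder/fequiv_cycD. Qed.

Lemma fequiv_mxtr (M N : ncmx R n) : mxequiv M N -> fequiv (mxtr M) (mxtr N).
Proof.
move=> eqMN h; rewrite /mxtr !feval_flatten !big_map.
by apply: eq_bigr => i _; rewrite (eqMN i i).
Qed.

Lemma feval_tauE tau (t : nctens R n) h :
  feval h (tauE tau t) = feval (fun p => tau p.2 * h p.1 + tau p.1 * h p.2) t.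
Proof.
rewrite /tauE feval_flatten big_map; apply: eq_bigr => x _.
by rewrite /feval !big_cons big_nil /=; ring.
Qed.

Lemma fequiv_tauE tau (t t' : nctens R n) :
  fequiv t t' -> fequiv (tauE tau t) (tauE tau t').
Proof. by move=> eqt h; rewrite !feval_tauE eqt. Qed.

Lemma fequiv_Qm tau m (g g' : 'I_m -> ncpoly R n) :
  (forall k, fequiv (g k) (g' k)) -> fequiv (Qm tau g) (Qm tau g').
Proof.
move=> eqg; apply/fequiv_tauE/fequiv_mxtr/mxequiv_prod => k.
exact: mxequiv_JD.
Qed.

End Equivalence.

Section Canonical.
Variables (R : numClosedFieldType) (n : nat).

Lemma sum_words_select (x : word n) N (F : word n -> R) :
  \sum_(k < N.+1) \sum_(w : k.-tuple 'I_n) (x == tval w)%:R * F (tval w)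
  = (size x <= N)%:R * F x.
Proof.
have one_length k : \sum_(w : k.-tuple 'I_n) (x == tval w)%:R * F (tval w)
                    = (size x == k)%:R * F x.
  have [xk|xk] := eqVneq (size x) k.
  - pose t : k.-tuple 'I_n := @Tuple k _ x (introT eqP xk).
    rewrite (bigD1 t) //= eqxx mul1r big1 ?addr0 // => w w_ne.
    by rewrite (_ : x = tval t) // val_eqE eq_sym (negbTE w_ne) mul0r.
  - rewrite mul0r big1 // => w _; case: eqP => [xw|_]; last by rewrite mul0r.
    by move: xk; rewrite xw size_tuple eqxx.
under eq_bigr do rewrite one_length.
rewrite -mulr_suml; congr (_ * _).
have [xN|xN] := leqP (size x) N.
- rewrite (bigD1 (Ordinal (xN : (size x < N.+1)%N))) //= eqxx big1 ?addr0 // => k kx.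
  by case: eqP => // xk; move: kx; rewrite -val_eqE /= xk eqxx.
- by rewrite big1 // => k _; case: eqP => // xk; have := ltn_ord k; lia.
Qed.

Lemma coefE (P : ncpoly R n) w : coef P w = feval (fun v => (v == w)%:R) P.
Proof.
rewrite /coef /feval big_mkcond; apply: eq_bigr => x _.
by case: (x.2 == w); rewrite ?mulr1 ?mulr0.
Qed.

(* Triangle inequality: ||P||_A is at most the weighted l1-sum of the
   coefficients of any representative of P. *)
Lemma normA_le_fnorm (A : R) (P P' : ncpoly R n) : 0 <= A ->
  fequiv P P' -> normA A P <= fnorm (fun w => A ^+ size w) P'.
Proof.
move=> A_ge0 eqPQ; rewrite /normA.
apply: le_trans (_ : _ <= \sum_(k < (maxdeg P).+1) \sum_(w : k.-tuple 'I_n)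
   \sum_(x <- P') `|x.1| * ((x.2 == tval w)%:R * A ^+ size (tval w))) _.
  apply: ler_sum => k _; apply: ler_sum => w _.
  rewrite coefE eqPQ size_tuple.
  under [X in _ <= X]eq_bigr do rewrite mulrA.
  rewrite -mulr_suml ler_wpM2r ?exprn_ge0 //.
  apply: le_trans (ler_norm_sum _ _ _) _; apply: ler_sum => x _.
  by rewrite normrM normr_nat.
under eq_bigr do rewrite exchange_big.
rewrite exchange_big /=; apply: ler_sum => x _.
under eq_bigr do rewrite -mulr_sumr.
rewrite -mulr_sumr (sum_words_select _ _ (fun v => A ^+ size v)) ler_wpM2l //.
by case: (size x.2 <= _)%N; rewrite ?mul1r ?mul0r ?exprn_ge0.
Qed.

Definition canon (P : ncpoly R n) : ncpoly R n :=
  flatten [seq [seq (coef P (tval w), tval w) | w <- enum {: k.-tuple 'I_n}]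
          | k : 'I_(maxdeg P).+1 <- enum 'I_(maxdeg P).+1].

Lemma fnorm_canon (A : R) (P : ncpoly R n) :
  fnorm (fun w => A ^+ size w) (canon P) = normA A P.
Proof.
rewrite /fnorm big_flatten big_map big_enum /=; apply: eq_bigr => k _.
by rewrite big_map big_enum; apply: eq_bigr => w _ /=; rewrite size_tuple.
Qed.

Lemma fequiv_canon (P : ncpoly R n) : fequiv P (canon P).
Proof.
move=> h; rewrite /feval big_flatten big_map big_enum /=.
under [RHS]eq_bigr => k _ do rewrite big_map big_enum /=.
under [RHS]eq_bigr => k _ do under eq_bigr => w _ do rewrite coefE /feval mulr_suml.
under [RHS]eq_bigr => k _ do rewrite exchange_big.
rewrite exchange_big /=; apply: eq_big_seq => x Px.
under eq_bigr do under eq_bigr do rewrite -mulrA.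
under eq_bigr do rewrite -mulr_sumr.
rewrite -mulr_sumr (sum_words_select _ _ h).
suff -> : (size x.2 <= maxdeg P)%N by rewrite mul1r.
exact: (@leq_bigmax_seq _ P xpredT (fun y : R * word n => size y.2) x Px).
Qed.

End Canonical.

Section GeometricSums.
Variable R : numDomainType.

(* geo a c s = sum_{p < s} a^p c^(s-1-p), the mass of the splittings of a word
   of length s into (prefix, letter, suffix) under the weight a^|prefix| c^|suffix|. *)
Definition geo (a c : R) (s : nat) : R := \sum_(p < s) a ^+ p * c ^+ (s - p.+1).

Lemma geo_sym (a c : R) s : geo a c s = geo c a s.
Proof.
rewrite /geo (reindex_inj rev_ord_inj) /=; apply: eq_bigr => p _.
have p_lt := ltn_ord p; rewrite mulrC; congr (_ ^+ _ * _ ^+ _); lia.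
Qed.

Lemma geoS (a c : R) s : geo a c s.+1 = c * geo a c s + a ^+ s.
Proof.
rewrite /geo big_ord_recr /= subnn expr0 mulr1 mulr_sumr; congr (_ + _).
apply: eq_bigr => p _ /=; rewrite mulrCA -exprS; congr (_ * _ ^+ _).
by have := ltn_ord p; lia.
Qed.

(* When 2c <= a the sum is dominated by twice its largest term a^(s-1). *)
Lemma geo_le (a c : R) s : 0 <= c -> c * 2 <= a -> a * geo a c s <= 2 * a ^+ s.
Proof.
move=> c_ge0 ca; have a_ge0 : 0 <= a by apply: le_trans ca; rewrite mulr_ge0.
elim: s => [|s IH]; first by rewrite /geo big_ord0 mulr0 mulr_ge0.
rewrite geoS mulrDr mulrCA exprS.
apply: le_trans (_ : c * (2 * a ^+ s) + a * a ^+ s <= _).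
  by rewrite lerD2r; apply: ler_wpM2l.
have -> : c * (2 * a ^+ s) + a * a ^+ s = (c * 2 + a) * a ^+ s by ring.
have -> : 2 * (a * a ^+ s) = (a + a) * a ^+ s by ring.
by rewrite ler_wpM2r ?exprn_ge0 ?lerD2r.
Qed.

End GeometricSums.

Section SplitWeights.
Variables (R : numDomainType) (T : Type).

Definition wt (a c : R) (p : seq T * seq T) : R := a ^+ size p.1 * c ^+ size p.2.

Lemma wt_cat (a c : R) (u v u' v' : seq T) :
  wt a c (u ++ u', v' ++ v) = wt a c (u, v) * wt a c (u', v').
Proof. by rewrite /wt /= !size_cat !exprD; ring. Qed.

Lemma wt_nil (a c : R) : wt a c ([::], [::]) = 1.
Proof. by rewrite /wt /= !expr0 mulr1. Qed.

Lemma wt_ge0 (a c : R) p : 0 <= a -> 0 <= c -> 0 <= wt a c p.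
Proof. by move=> a_ge0 c_ge0; rewrite mulr_ge0 ?exprn_ge0. Qed.

Lemma wt_split (a c : R) (v : seq T) :
  \sum_(p < size v) wt a c (take p v, drop p.+1 v) = geo a c (size v).
Proof.
apply: eq_bigr => p _; rewrite /wt /= size_drop size_takel //.
exact: ltnW.
Qed.

Lemma wt_split_swap (a c : R) (v : seq T) :
  \sum_(p < size v) wt c a (take p v, drop p.+1 v)
  = \sum_(p < size v) wt a c (take p v, drop p.+1 v).
Proof. by rewrite !wt_split geo_sym. Qed.

End SplitWeights.

Section SplitBound.
Variables (R : numFieldType) (T : Type).

Lemma wt_split_le (a c : R) (v : seq T) : 0 < a -> 0 <= c -> c * 2 <= a ->
  \sum_(p < size v) wt a c (take p v, drop p.+1 v) <= 2 * a ^+ size v / a.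
Proof.
by move=> a_gt0 c_ge0 ca; rewrite wt_split ler_pdivlMr // mulrC geo_le.
Qed.

End SplitBound.

Section Occurrences.
Variables (R : nmodType) (n : nat).

Lemma sum_occ (w : word n) (F : nat -> R) :
  \sum_(j : 'I_n) \sum_(p <- occ j w) F p = \sum_(p < size w) F p.
Proof.
rewrite /occ; under eq_bigr do rewrite big_filter big_mkcond.
rewrite exchange_big /= -(big_mkord xpredT F) /index_iota subn0 !big_seq.
apply: eq_bigr => p; rewrite mem_iota add0n => /andP [_ p_lt].
case: w p_lt => [//|a w] p_lt; under eq_bigr do rewrite (set_nth_default a) //.
rewrite (bigD1 (nth a (a :: w) p)) //= eqxx big1 ?addr0 // => j j_ne.
by rewrite eq_sym (negbTE j_ne).
Qed.

End Occurrences.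

Section Mass.
Variables (R : numClosedFieldType) (n : nat) (phi : word n * word n -> R).
Hypotheses (phi_ge0 : forall p, 0 <= phi p)
  (phi_cat : forall u v u' v', phi (u ++ u', v' ++ v) = phi (u, v) * phi (u', v'))
  (phi_nil : phi ([::], [::]) = 1).

Lemma fnorm_tmul (s t : nctens R n) : fnorm phi (tmul s t) = fnorm phi s * fnorm phi t.
Proof.
rewrite /fnorm /tmul big_allpairs_dep mulr_suml; apply: eq_bigr => x _.
rewrite mulr_sumr; apply: eq_bigr => y _ /=.
by rewrite normrM phi_cat -!surjective_pairing mulrACA.
Qed.

Definition mass (M : ncmx R n) i j : R := fnorm phi (M i j).
Definition mxmass (M : ncmx R n) : R := \sum_i \sum_j mass M i j.

Lemma mass_ge0 M i j : 0 <= mass M i j.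
Proof. exact: fnorm_ge0. Qed.

Lemma mxmass_ge0 M : 0 <= mxmass M.
Proof. by do 2!apply: sumr_ge0 => ? _; apply: mass_ge0. Qed.

Lemma mass_mul M N i j : mass (mxmul M N) i j = \sum_k mass M i k * mass N k j.
Proof.
rewrite /mass /mxmul fnorm_flatten big_map big_enum /=.
by apply: eq_bigr => k _; rewrite fnorm_tmul.
Qed.

Lemma mass_id i j : mass (@mxid R n) i j = (i == j)%:R.
Proof.
rewrite /mass /fnorm /mxid; case: (i == j); rewrite ?big_cons big_nil //=.
by rewrite normr1 phi_nil mul1r addr0.
Qed.

Lemma mxmass_mul M N : mxmass (mxmul M N) <= mxmass M * mxmass N.
Proof.
rewrite /mxmass mulr_suml; apply: ler_sum => i _.
under eq_bigr do rewrite mass_mul.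
rewrite exchange_big /= mulr_suml; apply: ler_sum => k _.
rewrite -mulr_sumr ler_wpM2l ?mass_ge0 // [X in _ <= X](bigD1 k) //= lerDl.
by do 2!apply: sumr_ge0 => ? _; apply: mass_ge0.
Qed.

Lemma mxmass_mul1 M : mxmass (mxmul M (@mxid R n)) = mxmass M.
Proof.
apply: eq_bigr => i _; apply: eq_bigr => j _.
rewrite mass_mul (bigD1 j) //= mass_id eqxx mulr1 big1 ?addr0 // => k k_ne.
by rewrite mass_id (negbTE k_ne) mulr0.
Qed.

(* Hence the mass of a nonempty product is at most the product of the masses
   (the empty product is the identity, of mass n). *)
Lemma mxmass_prod (Ms : seq (ncmx R n)) : (0 < size Ms)%N ->
  mxmass (mxprod Ms) <= \prod_(N <- Ms) mxmass N.
Proof.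
case: Ms => [//|M Ms] _; elim: Ms M => [|M' Ms IH] M.
  by rewrite /= mxmass_mul1 big_seq1.
rewrite big_cons; apply: le_trans (mxmass_mul _ _) _.
by apply: ler_wpM2l; [exact: mxmass_ge0 | exact: IH].
Qed.

Lemma fnorm_mxtr M : fnorm phi (mxtr M) <= mxmass M.
Proof.
rewrite /mxtr fnorm_flatten big_map big_enum; apply: ler_sum => i _.
rewrite (bigD1 i) //= lerDl; apply: sumr_ge0 => j _; exact: mass_ge0.
Qed.

Section Jacobian.
Variable A : R.
Hypotheses (A_gt0 : 0 < A)
  (phi_split : forall v : word n,
     \sum_(p < size v) phi (take p v, drop p.+1 v) <= 2 * A ^+ size v / A).

(* Mass of the splittings of v: the l1-contribution of d_j over all j. *)
Let split_mass (v : word n) : R := \sum_(p < size v) phi (take p v, drop p.+1 v).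

Lemma nder_mass (Q : ncpoly R n) :
  \sum_j fnorm phi (nder j Q) = fnorm split_mass Q.
Proof.
under eq_bigr do rewrite /nder fnorm_expand.
rewrite -(fnorm_sum (fun j v => \sum_(u <- nder_mono j v) phi u)).
apply: eq_bigr => x _; congr (_ * _).
by under eq_bigr do rewrite /nder_mono big_map; rewrite sum_occ.
Qed.

Lemma cycD_mass (psi : word n -> R) (Q : ncpoly R n) :
  \sum_i fnorm psi (cycD i Q)
  = fnorm (fun w => \sum_(p < size w) psi (drop p.+1 w ++ take p w)) Q.
Proof.
under eq_bigr do rewrite /cycD fnorm_expand.
rewrite -(fnorm_sum (fun j v => \sum_(u <- cycD_mono j v) psi u)).
apply: eq_bigr => x _; congr (_ * _).
under eq_bigr do rewrite /cycD_mono big_map.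
exact: (sum_occ _ (fun p => psi (drop p.+1 x.2 ++ take p x.2))).
Qed.

Lemma fnorm_Sigma (psi : word n -> R) (P : ncpoly R n) :
  fnorm psi (Sigma P) = fnorm (fun w => psi w / (size w)%:R) P.
Proof.
rewrite /fnorm big_map; apply: eq_bigr => x _ /=.
by rewrite normrM normfV normr_nat mulrAC mulrA.
Qed.

(* The s rotations of a word of length s each have length s - 1, so their
   averaged splitting mass is at most 2 A^(s-1) / A = (2 / A^2) A^s. *)
Lemma rotation_mass (w : word n) :
  (\sum_(p < size w) split_mass (drop p.+1 w ++ take p w)) / (size w)%:R
  <= 2 / A ^+ 2 * A ^+ size w.
Proof.
case sw: (size w) => [|s].
  by rewrite big_ord0 mul0r mulr_ge0 ?exprn_ge0 ?divr_ge0 ?exprn_ge0 ?ltW.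
have rot_size (p : 'I_s.+1) : size (drop p.+1 w ++ take p w) = s.
  by rewrite size_cat size_drop size_takel sw; have := ltn_ord p; lia.
apply: le_trans (_ : (\sum_(p < s.+1) (2 * A ^+ s / A)) / s.+1%:R <= _).
  rewrite ler_wpM2r ?invr_ge0 ?ler0n //; apply: ler_sum => p _; rewrite /split_mass.
  by have := phi_split (drop p.+1 w ++ take p w); rewrite rot_size.
have average (c : R) : c *+ s.+1 / s.+1%:R = c.
  by rewrite -[c *+ _]mulr_natr mulfK ?pnatr_eq0.
rewrite sumr_const card_ord average le_eqVlt; apply/orP; left; apply/eqP.
rewrite (_ : A ^+ 2 = A * A); last exact: expr2.
by rewrite exprS; field; rewrite gt_eqF.
Qed.

Lemma mxmass_JD_Sigma (P : ncpoly R n) :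
  mxmass (JD (Sigma P)) <= 2 / A ^+ 2 * fnorm (fun w => A ^+ size w) P.
Proof.
rewrite /mxmass /mass /JD; under eq_bigr do rewrite nder_mass.
rewrite cycD_mass fnorm_Sigma /fnorm mulr_sumr; apply: ler_sum => x _.
by rewrite [X in _ <= X]mulrCA; apply: ler_wpM2l => //; exact: rotation_mass.
Qed.

Lemma mass_trace_prod m (h : 'I_m -> ncpoly R n) : (0 < m)%N ->
  fnorm phi (mxtr (mxprod [seq JD (Sigma (h k)) | k <- enum 'I_m]))
  <= (2 / A ^+ 2) ^+ m * \prod_(k < m) fnorm (fun w => A ^+ size w) (h k).
Proof.
move=> m_gt0; apply: le_trans (fnorm_mxtr _) _.
apply: le_trans (mxmass_prod _) _; first by rewrite size_map size_enum_ord.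
rewrite big_map big_enum /=.
apply: le_trans
  (_ : _ <= \prod_(k < m) (2 / A ^+ 2 * fnorm (fun w => A ^+ size w) (h k))) _.
  by apply: ler_prod => k _; rewrite mxmass_ge0 mxmass_JD_Sigma.
by rewrite big_split /= prodr_const card_ord.
Qed.

End Jacobian.
End Mass.

Section MainEstimate.
Variables (R : numClosedFieldType) (n : nat) (tau : word n -> R) (A C0 : R).
Hypotheses (A_gt0 : 0 < A) (C0_ge0 : 0 <= C0) (C0A : C0 * 2 <= A)
  (tau_le : forall q : word n, `|tau q| <= C0 ^+ size q).

Lemma fnorm_tauE (t : nctens R n) :
  fnorm (fun w : word n => A ^+ size w) (tauE tau t)
  <= fnorm (wt A C0) t + fnorm (wt C0 A) t.
Proof.
have A_ge0 : 0 <= A by exact: ltW.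
rewrite /fnorm big_flatten big_map -big_split /=; apply: ler_sum => x _.
rewrite !big_cons big_nil addr0 /= /wt !normrM -!mulrA.
apply: lerD; apply: ler_wpM2l => //.
  by rewrite mulrC; apply: ler_wpM2l; rewrite ?exprn_ge0.
by apply: ler_wpM2r; rewrite ?exprn_ge0.
Qed.

Lemma fnorm_Qm_Sigma m (h : 'I_m -> ncpoly R n) : (0 < m)%N ->
  fnorm (fun w => A ^+ size w) (Qm tau (fun k => Sigma (h k)))
  <= 2 * (2 / A ^+ 2) ^+ m * \prod_(k < m) fnorm (fun w => A ^+ size w) (h k).
Proof.
move=> m_gt0; have A_ge0 : 0 <= A by exact: ltW.
have split_AC (v : word n) :
    \sum_(p < size v) wt A C0 (take p v, drop p.+1 v) <= 2 * A ^+ size v / A.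
  exact: wt_split_le.
have split_CA (v : word n) :
    \sum_(p < size v) wt C0 A (take p v, drop p.+1 v) <= 2 * A ^+ size v / A.
  by rewrite wt_split_swap.
apply: le_trans (fnorm_tauE _) _; rewrite -mulrA mulr2n mulrDl mul1r.
by apply: lerD; apply: mass_trace_prod => // *; rewrite ?wt_ge0 ?wt_cat ?wt_nil.
Qed.

End MainEstimate.

(* The hypothesis on tau forces C0 >= 0 as soon as there is a letter; with no
   letters every word is empty and the constant 0 works as well. *)
Lemma tau_bound_nonneg (R : numClosedFieldType) (n : nat) (tau : word n -> R) (C0 A : R) :
  (forall q : word n, `|tau q| <= C0 ^+ size q) -> 0 < A -> C0 * 2 <= A ->
  exists2 C1 : R, 0 <= C1 /\ C1 * 2 <= A & forall q : word n, `|tau q| <= C1 ^+ size q.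
Proof.
case: n tau => [|n'] tau tau_le A_gt0 C0A; last first.
  by exists C0 => //; split => //; apply: le_trans (tau_le [:: ord0]); rewrite normr_ge0.
exists 0; first by rewrite lexx mul0r ltW.
by case=> [|[] //]; have := tau_le [::].
Qed.

Theorem mainTheorem8 (R : numClosedFieldType) (n : nat) (tau : word n -> R)
    (C0 A : R) (m : nat) (g : 'I_m -> ncpoly R n) :
  (forall q : word n, `|tau q| <= C0 ^+ size q) ->
  1 < A -> C0 / A < 2^-1 ->
  (0 < m)%N ->
  (forall k, in_A0 (g k)) ->
  normA A (Qm tau (fun k => Sigma (g k)))
    <= 2 * (2 / A ^+ 2) ^+ m * \prod_(k < m) normA A (g k).
Proof.
move=> tau_le A_gt1 C0A m_gt0 _.
have A_gt0 : 0 < A by apply: lt_trans A_gt1.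
have C0A' : C0 * 2 <= A.
  by apply: ltW; move: C0A; rewrite ltr_pdivrMr // mulrC -ltr_pdivlMr.
have [C1 [C1_ge0 C1A] tau_le1] := tau_bound_nonneg tau_le A_gt0 C0A'.
have eqQ : fequiv (Qm tau (fun k => Sigma (g k))) (Qm tau (fun k => Sigma (canon (g k)))).
  by apply: fequiv_Qm => k; apply/fequiv_Sigma/fequiv_canon.
apply: le_trans (normA_le_fnorm (ltW A_gt0) eqQ) _.
under eq_bigr do rewrite -fnorm_canon.
exact: (fnorm_Qm_Sigma A_gt0 C1_ge0 C1A tau_le1 _ m_gt0).
Qed.
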